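(* Let $\mathbb{F}$ be a subfield of $\mathbb{R}$ and let $\vec v_1,\vec v_2,\vec v_3$ be an orthogonal basis of $\mathbb{F}^3$. Put $V_j:=\mathbb{F}\vec v_j\in\mathbb{P}^2(\mathbb{F})$, $V_{12}:=\mathbb{F}(\vec v_1-\vec v_2)$, $V_{23}:=\mathbb{F}(\vec v_2-\vec v_3)$, $V_{13}:=\mathbb{F}(\vec v_1-\vec v_3)$. Then $V_1\times V_2=V_3$, $V_2\times V_3=V_1$, $V_3\times V_1=V_2$, and for all $r,s\in\mathbb{F}$: \begin{enumerate} \item[a)] $\mathbb{F}(\vec v_1-rs\vec v_2)=V_3\times\big[\mathbb{F}(\vec v_3-r\vec v_2)\times\mathbb{F}(\vec v_1-s\vec v_3)\big]$; \item[b)] $\mathbb{F}(\vec v_1-s\vec v_3)=V_2\times\big[V_{23}\times\mathbb{F}(\vec v_1-s\vec v_2)\big]$; \item[c)] $\mathbb{F}(\vec v_3-r\vec v_2)=V_1\times\big[V_{13}\times\mathbb{F}(\vec v_1-r\vec v_2)\big]$; \item[d)] $\mathbb{F}(\vec v_1-(r-s)\vec v_2)=V_3\times\Big[\big([V_{23}\times\mathbb{F}(\vec v_1-r\vec v_2)]\times[V_2\times\mathbb{F}(\vec v_1-s\vec v_3)]\big)\times V_3\Big]$; \item[e)] $V_{13}=V_2\times(V_{12}\times V_{23})$; \item[f)] for $W\in\mathbb{P}^2(\mathbb{F})$, the expression $\imath(W):=(W\times V_3)\times\Big(\big((W\times V_3)\times V_3\big)\times V_2\Big)$ is defined precisely when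 $W=\mathbb{F}(\vec v_1-r\vec v_2+s\vec v_3)$ for some $s\in\mathbb{F}$ and a unique $r\in\mathbb{F}$, and in this case $\imath(W)=\mathbb{F}(\vec v_1-r\vec v_2)$. Moreover, if $W=\mathbb{F}(\vec v_1-r\vec v_2)$ then $\imath(W)=W$. \end{enumerate}
   Context: $\mathbb{P}^2(\mathbb{F})=\{\mathbb{F}\vec v:\vec 0\ne\vec v\in\mathbb{F}^3\}$ with $\mathbb{F}\vec v=\{\lambda\vec v:\lambda\in\mathbb{F}\}$. For distinct $\mathbb{F}\vec v,\mathbb{F}\vec w\in\mathbb{P}^2(\mathbb{F})$ the projective cross product is $\mathbb{F}\vec v\times\mathbb{F}\vec w:=\mathbb{F}(\vec v\times\vec w)$, where $\times$ is the usual cross product on $\mathbb{F}^3$; $\mathbb{F}\vec v\times\mathbb{F}\vec v$ is undefined, and an expression built from it is defined only if all its subexpressions are defined. All equalities in the claim are equalities of (defined) elements of $\mathbb{P}^2(\mathbb{F})$. *)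

From HB Require Import structures.
From mathcomp Require Import all_boot all_order all_algebra.
From mathcomp Require Import reals.
Set Implicit Arguments. Unset Strict Implicit. Unset Printing Implicit Defensive.
Import Order.TTheory GRing.Theory Num.Theory.
Local Open Scope ring_scope.

Section Proj.
Variable F : fieldType.

Definition c0 (u : 'rV[F]_3) : F := u ord0 (inord 0).
Definition c1 (u : 'rV[F]_3) : F := u ord0 (inord 1).
Definition c2 (u : 'rV[F]_3) : F := u ord0 (inord 2).

Definition dot3 (u v : 'rV[F]_3) : F := \sum_(i < 3) u ord0 i * v ord0 i.

Definition cross3 (u v : 'rV[F]_3) : 'rV[F]_3 :=
  \row_(i < 3)
    (if i == 0 :> nat then c1 u * c2 v - c2 u * c1 v
     else if i == 1 :> nat then c2 u * c0 v - c0 u * c2 v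
     else c0 u * c1 v - c1 u * c0 v).

(* Points of P^2(F) are the 1-dimensional subspaces of F^3.  Partially defined
   expressions are modelled with option: None = undefined. *)
Definition is_point (U : {vspace 'rV[F]_3}) : bool := \dim U == 1%N.

Definition pt (v : 'rV[F]_3) : option {vspace 'rV[F]_3} :=
  if v != 0 then Some <[v]>%VS else None.

(* projective cross product: defined only for two defined, distinct points;
   F v x F w := F (v x w), where v, w are (any) nonzero spanning vectors *)
Definition pcross (U W : option {vspace 'rV[F]_3}) : option {vspace 'rV[F]_3} :=
  match U, W with
  | Some U', Some W' =>
      if [&& is_point U', is_point W' & U' != W'] then pt (cross3 (vpick U') (vpick W'))
      else None
  | _, _ => None
  end.

End Proj.

From HB Require Import structures.
From mathcomp Require Import all_boot all_order all_algebra.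
From mathcomp Require Import reals ring.
Import Order.TTheory GRing.Theory Num.Theory.
Local Open Scope ring_scope.

Set Implicit Arguments. Unset Strict Implicit.

(* For an orthogonal basis, [v1 x v2], [v2 x v3], [v3 x v1] are nonzero
   multiples [a v3], [b v1], [c v2]: each is orthogonal to two of the basis
   vectors, hence parallel to the third, and it is nonzero because the factors
   are independent.  In coordinates with respect to v1, v2, v3 the cross
   product is then the usual formula with the components weighted by b, c, a,
   so every identity of the statement compares two coordinate triples that
   differ by a nonzero product of a, b, c. *)

Lemma free_rot (K : fieldType) (vT : vectType K) n (X : seq vT) :
  free (rot n X) = free X.
Proof. exact/perm_free/permPl/perm_rot. Qed.

Section CrossProduct.
Variable F : fieldType.
Implicit Types (u w z : 'rV[F]_3) (k : F).

Lemma row3P u w : c0 u = c0 w -> c1 u = c1 w -> c2 u = c2 w -> u = w.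
Proof.
move=> e0 e1 e2; apply/rowP => -[[|[|[|//]]] lti].
- by have -> : Ordinal lti = inord 0 by apply/val_inj; rewrite /= inordK.
- by have -> : Ordinal lti = inord 1 by apply/val_inj; rewrite /= inordK.
- by have -> : Ordinal lti = inord 2 by apply/val_inj; rewrite /= inordK.
Qed.

Lemma c0D u w : c0 (u + w) = c0 u + c0 w. Proof. by rewrite /c0 mxE. Qed.
Lemma c1D u w : c1 (u + w) = c1 u + c1 w. Proof. by rewrite /c1 mxE. Qed.
Lemma c2D u w : c2 (u + w) = c2 u + c2 w. Proof. by rewrite /c2 mxE. Qed.
Lemma c0N u : c0 (- u) = - c0 u. Proof. by rewrite /c0 mxE. Qed.
Lemma c1N u : c1 (- u) = - c1 u. Proof. by rewrite /c1 mxE. Qed.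
Lemma c2N u : c2 (- u) = - c2 u. Proof. by rewrite /c2 mxE. Qed.
Lemma c0Z k u : c0 (k *: u) = k * c0 u. Proof. by rewrite /c0 mxE. Qed.
Lemma c1Z k u : c1 (k *: u) = k * c1 u. Proof. by rewrite /c1 mxE. Qed.
Lemma c2Z k u : c2 (k *: u) = k * c2 u. Proof. by rewrite /c2 mxE. Qed.
Lemma c00 : c0 (0 : 'rV[F]_3) = 0. Proof. by rewrite /c0 mxE. Qed.
Lemma c10 : c1 (0 : 'rV[F]_3) = 0. Proof. by rewrite /c1 mxE. Qed.
Lemma c20 : c2 (0 : 'rV[F]_3) = 0. Proof. by rewrite /c2 mxE. Qed.
Lemma c0_cross u w : c0 (cross3 u w) = c1 u * c2 w - c2 u * c1 w.
Proof. by rewrite {1}/c0 mxE inordK. Qed.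
Lemma c1_cross u w : c1 (cross3 u w) = c2 u * c0 w - c0 u * c2 w.
Proof. by rewrite {1}/c1 mxE inordK. Qed.
Lemma c2_cross u w : c2 (cross3 u w) = c0 u * c1 w - c1 u * c0 w.
Proof. by rewrite {1}/c2 mxE inordK. Qed.

Definition coordE := (c0D, c1D, c2D, c0N, c1N, c2N, c0Z, c1Z, c2Z, c00, c10, c20,
  c0_cross, c1_cross, c2_cross).

Lemma dot3E u w : dot3 u w = c0 u * c0 w + c1 u * c1 w + c2 u * c2 w.
Proof.
rewrite /dot3 !big_ord_recr big_ord0 /= add0r /c0 /c1 /c2.
by congr (_ * _ + _ * _ + _ * _); congr (_ _ _); apply/val_inj; rewrite /= inordK.
Qed.

Lemma dot3C u w : dot3 u w = dot3 w u.
Proof. by rewrite !dot3E; ring. Qed.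

Lemma dot3_delta i u : dot3 (delta_mx ord0 i) u = u ord0 i.
Proof.
rewrite /dot3 (bigD1 i) //= mxE !eqxx mul1r big1 ?addr0 // => j ji.
by rewrite mxE (negbTE ji) andbF mul0r.
Qed.

Lemma crossDl u w z : cross3 (u + w) z = cross3 u z + cross3 w z.
Proof. by apply: row3P; rewrite !coordE; ring. Qed.
Lemma crossDr u w z : cross3 z (u + w) = cross3 z u + cross3 z w.
Proof. by apply: row3P; rewrite !coordE; ring. Qed.
Lemma crossZl k u z : cross3 (k *: u) z = k *: cross3 u z.
Proof. by apply: row3P; rewrite !coordE; ring. Qed.
Lemma crossZr k u z : cross3 z (k *: u) = k *: cross3 z u.
Proof. by apply: row3P; rewrite !coordE; ring. Qed.
Lemma crossC u w : cross3 u w = - cross3 w u.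
Proof. by apply: row3P; rewrite !coordE; ring. Qed.
Lemma crossvv u : cross3 u u = 0.
Proof. by apply: row3P; rewrite !coordE; ring. Qed.

Lemma cross0v u : cross3 0 u = 0.
Proof. by apply: row3P; rewrite !coordE; ring. Qed.
Lemma crossv0 u : cross3 u 0 = 0.
Proof. by rewrite crossC cross0v oppr0. Qed.

Lemma cross_triple u w z : cross3 z (cross3 u w) = dot3 z w *: u - dot3 z u *: w.
Proof. by apply: row3P; rewrite !dot3E !coordE; ring. Qed.

(* [w] is proportional to [u] because some basis covector [e] has [e.u != 0],
   and [e x (u x w) = (e.w) u - (e.u) w] vanishes. *)
Lemma cross_eq0_parallel u w : u != 0 -> cross3 u w = 0 -> exists k, w = k *: u.
Proof.
move=> u0 uw0; have [i ui] : exists i, u ord0 i != 0.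
  apply/existsP; apply: contraNT u0; rewrite negb_exists => /forallP u_eq0.
  by apply/eqP/rowP => j; rewrite mxE; apply/eqP/negPn/u_eq0.
have := cross_triple u w (delta_mx ord0 i); rewrite uw0 crossv0 !dot3_delta.
move/esym/eqP; rewrite subr_eq0 => /eqP e.
by exists (w ord0 i / u ord0 i); rewrite mulrC -scalerA e scalerA mulVf ?scale1r.
Qed.

Lemma cross_orthogonal u w z : z != 0 -> dot3 u z = 0 -> dot3 w z = 0 ->
  exists k, cross3 u w = k *: z.
Proof.
move=> z0 uz wz; apply: cross_eq0_parallel z0 _.
by rewrite cross_triple dot3C wz dot3C uz !scale0r subr0.
Qed.

Lemma cross_free_orthogonal u w z : free [:: u; w; z] ->
  dot3 u z = 0 -> dot3 w z = 0 -> exists2 k, k != 0 & cross3 u w = k *: z.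
Proof.
move=> free_uwz uz wz.
have z0 : z != 0 by apply: free_not0 free_uwz _; rewrite !inE eqxx !orbT.
have u0 : u != 0 by apply: free_not0 free_uwz _; rewrite !inE eqxx.
have [k ek] := cross_orthogonal z0 uz wz; exists k => //.
apply: contraTneq free_uwz => k0.
have [m wm] : exists m, w = m *: u by apply: cross_eq0_parallel u0 _; rewrite ek k0 scale0r.
rewrite -(free_rot 1) /= free_cons wm memvZ //.
by rewrite memv_span // !inE eqxx orbT.
Qed.

Lemma ptZ k u : k != 0 -> pt (k *: u) = pt u.
Proof.
move=> k0; rewrite /pt scaler_eq0 (negbTE k0) /=.
have [//|u0] := eqVneq u 0; congr Some; apply/eqP.
by rewrite eqEdim -memvE memvZ ?memv_line // !dim_vline scaler_eq0 (negbTE k0) u0.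
Qed.

Lemma vpick_line u : u != 0 -> exists2 k, k != 0 & vpick <[u]>%VS = k *: u.
Proof.
move=> u0; have /vlineP[k ek] := memv_pick <[u]>%VS; exists k => //.
have pick0 : vpick <[u]>%VS != 0 by rewrite vpick0 -dimv_eq0 dim_vline u0.
by apply: contraNneq pick0 => k0; rewrite ek k0 scale0r.
Qed.

Lemma pcross_pt u w : pcross (pt u) (pt w) = pt (cross3 u w).
Proof.
have [->|u0] := eqVneq u 0; first by rewrite cross0v /pt eqxx.
have [->|w0] := eqVneq w 0; first by rewrite crossv0 /pt u0 eqxx.
rewrite {1 2}/pt u0 w0 /= /is_point !dim_vline u0 w0 /=.
have [uw|uw] := eqVneq <[u]>%VS <[w]>%VS; last first.
  have [k k0 ->] := vpick_line u0; have [l l0 ->] := vpick_line w0.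
  by rewrite crossZl crossZr scalerA ptZ ?mulf_neq0.
have /vlineP[m ->] : w \in <[u]>%VS by rewrite uw memv_line.
by rewrite crossZr crossvv scaler0 /pt eqxx.
Qed.

Lemma pt_vpick (W : {vspace 'rV[F]_3}) : \dim W = 1%N -> Some W = pt (vpick W).
Proof.
move=> dW; have p0 : vpick W != 0 by rewrite vpick0 -dimv_eq0 dW.
rewrite /pt p0; congr Some; apply/eqP.
by rewrite eq_sym eqEdim -memvE memv_pick dim_vline p0 dW.
Qed.

Lemma pt_eq_scale u w : u != 0 -> pt u = pt w -> exists k, w = k *: u.
Proof.
rewrite /pt => ->; have [//|w0 /(congr1 (odflt 0%VS)) /= uw] := eqVneq w 0.
by apply/vlineP; rewrite uw memv_line.
Qed.

End CrossProduct.

Section Frame.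
Variables (F : fieldType) (v1 v2 v3 : 'rV[F]_3) (a b c : F).
Hypothesis basis123 : basis_of fullv [:: v1; v2; v3].
Hypotheses (cross12 : cross3 v1 v2 = a *: v3) (cross23 : cross3 v2 v3 = b *: v1)
  (cross31 : cross3 v3 v1 = c *: v2).
Hypotheses (a_neq0 : a != 0) (b_neq0 : b != 0) (c_neq0 : c != 0).

Definition comb (x y z : F) := x *: v1 + y *: v2 + z *: v3.

Lemma combD x1 x2 x3 y1 y2 y3 :
  comb x1 x2 x3 + comb y1 y2 y3 = comb (x1 + y1) (x2 + y2) (x3 + y3).
Proof. by apply: row3P; rewrite !coordE; ring. Qed.
Lemma combN x1 x2 x3 : - comb x1 x2 x3 = comb (- x1) (- x2) (- x3).
Proof. by apply: row3P; rewrite !coordE; ring. Qed.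
Lemma combZ k x1 x2 x3 : k *: comb x1 x2 x3 = comb (k * x1) (k * x2) (k * x3).
Proof. by apply: row3P; rewrite !coordE; ring. Qed.
Definition combE := (combD, combN, combZ).

Lemma v1_comb : v1 = comb 1 0 0.
Proof. by rewrite /comb !scale0r !addr0 scale1r. Qed.
Lemma v2_comb : v2 = comb 0 1 0.
Proof. by rewrite /comb !scale0r add0r addr0 scale1r. Qed.
Lemma v3_comb : v3 = comb 0 0 1.
Proof. by rewrite /comb !scale0r !add0r scale1r. Qed.

Lemma comb_eq0 x y z : comb x y z = 0 -> [/\ x = 0, y = 0 & z = 0].
Proof.
move=> xyz0; have /freeP free123 : free [tuple v1; v2; v3] := basis_free basis123.
have /free123 coef0 : \sum_(i < 3) [:: x; y; z]`_i *: [tuple v1; v2; v3]`_i = 0.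
  by rewrite !big_ord_recr big_ord0 /= add0r.
by split; [apply: (coef0 0) | apply: (coef0 1) | apply: (coef0 2)].
Qed.

Lemma comb_inj x1 x2 x3 y1 y2 y3 : comb x1 x2 x3 = comb y1 y2 y3 ->
  [/\ x1 = y1, x2 = y2 & x3 = y3].
Proof.
move/eqP; rewrite -subr_eq0 combN combD => /eqP/comb_eq0[].
by move=> /subr0_eq -> /subr0_eq -> /subr0_eq ->.
Qed.

Lemma comb_surj w : exists x y z, w = comb x y z.
Proof.
have /andP[/eqP span123 _] := basis123.
have /coord_span -> : w \in span [tuple v1; v2; v3] by rewrite /= span123 memvf.
by rewrite !big_ord_recr big_ord0 /= add0r; do 3 eexists.
Qed.

Lemma cross_comb x1 x2 x3 y1 y2 y3 :
  cross3 (comb x1 x2 x3) (comb y1 y2 y3) =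
  comb (b * (x2 * y3 - x3 * y2)) (c * (x3 * y1 - x1 * y3)) (a * (x1 * y2 - x2 * y1)).
Proof.
rewrite /comb !crossDl !crossDr !crossZl !crossZr !crossvv !scaler0.
rewrite (crossC v2 v1) (crossC v3 v2) (crossC v1 v3) cross12 cross23 cross31.
by apply: row3P; rewrite !coordE; ring.
Qed.

Lemma pt_comb_proportional k x1 x2 x3 y1 y2 y3 : k != 0 ->
  y1 = k * x1 -> y2 = k * x2 -> y3 = k * x3 ->
  pt (comb x1 x2 x3) = pt (comb y1 y2 y3).
Proof. by move=> k0 -> -> ->; rewrite -combZ ptZ. Qed.

Lemma chart_comb r s : v1 - r *: v2 + s *: v3 = comb 1 (- r) s.
Proof. by rewrite v1_comb v2_comb v3_comb !combE; congr comb; ring. Qed.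

Lemma comb1_neq0 y z : comb 1 y z != 0.
Proof. by apply/eqP => /comb_eq0[/eqP]; rewrite oner_eq0. Qed.

Lemma pt_chart_inj r s r' s' :
  pt (v1 - r *: v2 + s *: v3) = pt (v1 - r' *: v2 + s' *: v3) -> r = r'.
Proof.
rewrite !chart_comb => /(pt_eq_scale (comb1_neq0 _ _))[k]; rewrite combZ => /comb_inj[k1 + _].
by rewrite mulr1 in k1; rewrite -k1 mul1r => /oppr_inj ->.
Qed.

Lemma pcross_frame :
  [/\ pcross (pt v1) (pt v2) = pt v3, pcross (pt v2) (pt v3) = pt v1
    & pcross (pt v3) (pt v1) = pt v2].
Proof.
rewrite v1_comb v2_comb v3_comb !pcross_pt !cross_comb.
split; symmetry; [apply: (pt_comb_proportional a_neq0) | apply: (pt_comb_proportional b_neq0)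
  | apply: (pt_comb_proportional c_neq0)]; ring.
Qed.

Lemma pcross_identities r s :
  [/\ pt (v1 - (r * s) *: v2) =
        pcross (pt v3) (pcross (pt (v3 - r *: v2)) (pt (v1 - s *: v3))),
      pt (v1 - s *: v3) = pcross (pt v2) (pcross (pt (v2 - v3)) (pt (v1 - s *: v2))),
      pt (v3 - r *: v2) = pcross (pt v1) (pcross (pt (v1 - v3)) (pt (v1 - r *: v2))),
      pt (v1 - (r - s) *: v2) =
        pcross (pt v3) (pcross (pcross (pcross (pt (v2 - v3)) (pt (v1 - r *: v2)))
                                       (pcross (pt v2) (pt (v1 - s *: v3)))) (pt v3))
    & pt (v1 - v3) = pcross (pt v2) (pcross (pt (v1 - v2)) (pt (v2 - v3)))].
Proof.
have opp_neq0 (x : F) : x != 0 -> - x != 0 by rewrite oppr_eq0.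
have ab0 := mulf_neq0 a_neq0 b_neq0; have bc0 := mulf_neq0 b_neq0 c_neq0.
have ac0 := mulf_neq0 a_neq0 c_neq0.
rewrite v1_comb v2_comb v3_comb !combE !pcross_pt !cross_comb.
split; [apply: (pt_comb_proportional (opp_neq0 _ bc0))
       | apply: (pt_comb_proportional (opp_neq0 _ ab0))
       | apply: (pt_comb_proportional (opp_neq0 _ ac0))
       | apply: (pt_comb_proportional (mulf_neq0 (mulf_neq0 ab0 c_neq0) bc0))
       | apply: (pt_comb_proportional ab0)]; ring.
Qed.

Definition imath (W : option {vspace 'rV[F]_3}) :=
  pcross (pcross W (pt v3)) (pcross (pcross (pcross W (pt v3)) (pt v3)) (pt v2)).

Lemma imath_comb x y z :
  imath (pt (comb x y z)) = pt ((a * b ^+ 2 * c ^+ 2 * x) *: comb x y 0).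
Proof.
rewrite /imath v2_comb v3_comb !pcross_pt !cross_comb combZ.
by congr (pt _); congr comb; ring.
Qed.

Lemma imath_chart r s : imath (pt (v1 - r *: v2 + s *: v3)) = pt (v1 - r *: v2).
Proof.
have abc0 := mulf_neq0 (mulf_neq0 a_neq0 (expf_neq0 2 b_neq0)) (expf_neq0 2 c_neq0).
rewrite chart_comb imath_comb ptZ; last by rewrite mulr1.
by rewrite v1_comb v2_comb !combE; congr (pt _); congr comb; ring.
Qed.

Lemma imath_defined (W : {vspace 'rV[F]_3}) : \dim W = 1%N ->
  imath (Some W) <> None <-> exists r s, Some W = pt (v1 - r *: v2 + s *: v3).
Proof.
move=> dW; split=> [|[r [s ->]]]; last first.
  rewrite imath_chart; have := chart_comb r 0; rewrite scale0r addr0 => ->.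
  by rewrite /pt comb1_neq0.
have [x [y [z xyz]]] := comb_surj (vpick W); rewrite (pt_vpick dW) xyz imath_comb.
have [-> | x0 _] := eqVneq x 0; first by rewrite mulr0 scale0r /pt eqxx.
exists (- (y / x)), (z / x); rewrite chart_comb.
by apply: (pt_comb_proportional (invr_neq0 x0)); field.
Qed.

End Frame.

Theorem lemma8 (R : realType) (F : fieldType) (emb : {rmorphism F -> R})
  (v1 v2 v3 : 'rV[F]_3)
  (hbasis : basis_of fullv [:: v1; v2; v3])
  (h12 : dot3 v1 v2 = 0) (h23 : dot3 v2 v3 = 0) (h13 : dot3 v1 v3 = 0) :
  let V1 := pt v1 in let V2 := pt v2 in let V3 := pt v3 in
  let V12 := pt (v1 - v2) in let V23 := pt (v2 - v3) in let V13 := pt (v1 - v3) in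
  let X := @pcross F in
  [/\ X V1 V2 = V3, X V2 V3 = V1, X V3 V1 = V2,
   (forall r s : F,
     [/\ pt (v1 - (r * s) *: v2) = X V3 (X (pt (v3 - r *: v2)) (pt (v1 - s *: v3))),
         pt (v1 - s *: v3) = X V2 (X V23 (pt (v1 - s *: v2))),
         pt (v3 - r *: v2) = X V1 (X V13 (pt (v1 - r *: v2))),
         pt (v1 - (r - s) *: v2) =
           X V3 (X (X (X V23 (pt (v1 - r *: v2))) (X V2 (pt (v1 - s *: v3)))) V3)
       & V13 = X V2 (X V12 V23)]) &
   (forall W : {vspace 'rV[F]_3}, \dim W = 1%N ->
     let iW := X (X (Some W) V3) (X (X (X (Some W) V3) V3) V2) in
     [/\ iW <> None <-> (exists r s : F, Some W = pt (v1 - r *: v2 + s *: v3)),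
         (forall r s r' s' : F, Some W = pt (v1 - r *: v2 + s *: v3) ->
            Some W = pt (v1 - r' *: v2 + s' *: v3) -> r = r'),
         (forall r s : F, Some W = pt (v1 - r *: v2 + s *: v3) -> iW = pt (v1 - r *: v2))
       & (forall r : F, Some W = pt (v1 - r *: v2) -> iW = Some W)])].
Proof.
have free_rot123 n : free (rot n [:: v1; v2; v3]) by rewrite free_rot (basis_free hbasis).
have [a a0 cross12] := cross_free_orthogonal (free_rot123 0%N) h13 h23.
have [b b0 cross23] := cross_free_orthogonal (free_rot123 1%N)
  (etrans (dot3C _ _) h12) (etrans (dot3C _ _) h13).
have [c c0 cross31] := cross_free_orthogonal (free_rot123 2%N)
  (etrans (dot3C _ _) h23) h12.
cbv zeta; have [-> -> ->] := pcross_frame cross12 cross23 cross31 a0 b0 c0.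
split=> // [r s|W dW]; first exact: (pcross_identities cross12 cross23 cross31 a0 b0 c0 r s).
have imath_chart_at := imath_chart cross12 cross23 cross31 a0 b0 c0.
split=> [|r s r' s' -> /(pt_chart_inj hbasis) //|r s ->|r Wr].
- exact: imath_defined hbasis cross12 cross23 cross31 a0 b0 c0 W dW.
- exact: imath_chart_at.
- by have := imath_chart_at r 0; rewrite scale0r addr0 -Wr; exact.
Qed.
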